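(* Let $p,q$ be relatively prime non-zero integers with $q>0$, let $\mu>0$ be an integer, and write $(2\mu-1)q=np+r$ and $(\mu-1)q=kp+t$ with $n,k\in\mathbb Z$ and $r,t\in\{0,\dots,|p|-1\}$. If $r>0$ then $$\sum_{|s|<\mu}\varphi_{[i]}(s)=\begin{cases}\left\lfloor\frac{(2\mu-1)q}{|p|}\right\rfloor+1 & \text{if } i\equiv p-t+j\pmod p\text{ for some } j\in\{0,\dots,r-1\},\\ \left\lfloor\frac{(2\mu-1)q}{|p|}\right\rfloor & \text{otherwise.}\end{cases}$$ If $r=0$ then $\sum_{|s|<\mu}\varphi_{[i]}(s)=\left\lfloor\frac{(2\mu-1)q}{|p|}\right\rfloor$ for all $[i]\in\mathbb Z/p\mathbb Z$.
   Context: For relatively prime non-zero integers $p,q$ and $i\in\mathbb Z$, $\varphi_{[i]}(s)$ denotes the cardinality of $\{n\in\mathbb Z:\lfloor\frac{i+pn}{q}\rfloor=s\}$; it depends only on the class $[i]$ of $i$ mod $p$. *)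

From mathcomp Require Import all_boot all_order all_algebra.
From mathcomp Require Import finmap.
From mathcomp Require Import boolp classical_sets cardinality.
Set Implicit Arguments. Unset Strict Implicit. Unset Printing Implicit Defensive.
Import Order.TTheory GRing.Theory Num.Theory.
Local Open Scope ring_scope.
Local Open Scope classical_set_scope.

(* phi p q i s = #{ n in Z | floor((i + p n)/q) = s }.
   For q > 0, (x %/ q)%Z is the floor of x/q.  The set is finite for
   p <> 0, q > 0, so fset_set gives its actual cardinality. *)
Definition phi (p q i s : int) : nat :=
  #|` fset_set [set n : int | ((i + p * n) %/ q)%Z = s] |%fset.

From mathcomp Require Import all_boot all_order all_algebra.
From mathcomp Require Import finmap.
From mathcomp Require Import boolp classical_sets cardinality.
From mathcomp Require Import zify.
Import Order.TTheory GRing.Theory Num.Theory.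
Local Open Scope ring_scope.

(* Substituting m = i + p n, phi p q i s counts the m in [s q, s q + q) that are
   congruent to i mod p, so the sum counts such m in [lo, lo + (2 mu - 1) q) with
   lo = -(mu - 1) q.  Writing the length as F |p| + r, each of the F full blocks
   of |p| consecutive integers contains exactly one such m, and the final r
   integers contain one iff (i - lo) mod p, which is (i + t) mod p, is below r. *)

Definition count_congr (p i lo : int) (len : nat) : nat :=
  count (fun j : nat => (lo + j%:Z == i %[mod p])%Z) (iota 0 len).

Lemma count_congrD p i lo a b :
  count_congr p i lo (a + b) =
    (count_congr p i lo a + count_congr p i (lo + a%:Z) b)%N.
Proof.
rewrite /count_congr iotaD count_cat add0n -[a]addn0 iotaDl count_map addn0.
by congr addn; apply: eq_count => j /=; rewrite PoszD addrA.
Qed.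

Lemma sum_count_congr p i lo len m :
  (\sum_(j < m) count_congr p i (lo + j%:Z * len%:Z) len)%N =
    count_congr p i lo (m * len).
Proof.
elim: m => [|m IHm]; first by rewrite big_ord0.
by rewrite big_ord_recr /= IHm mulSnr count_congrD PoszM.
Qed.

Lemma count_congr_small p i lo len : p != 0 -> (len <= `|p|)%N ->
  count_congr p i lo len = (((i - lo) %% p)%Z < len%:Z).
Proof.
move=> p0 len_le.
have res_ge0 := modz_ge0 (i - lo) p0.
rewrite /count_congr (@eq_in_count _ _ (pred1 `|((i - lo) %% p)%Z|%N)).
  by rewrite count_uniq_mem ?iota_uniq // mem_iota add0n; lia.
move=> j; rewrite mem_iota add0n /= => j_lt.
rewrite -(eqz_modDl (- lo)) addKr addrC -modz_abs modz_small; last by lia.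
by apply/eqP/eqP; lia.
Qed.

Lemma count_congr_period p i lo : p != 0 -> count_congr p i lo `|p| = 1%N.
Proof.
move=> p0; rewrite count_congr_small //.
by have := ltz_mod (i - lo) p0; rewrite -abszE => ->.
Qed.

Lemma count_congrMD p i lo m r : p != 0 -> (r <= `|p|)%N ->
  count_congr p i lo (m * `|p| + r) = (m + (((i - lo) %% p)%Z < r%:Z)%R)%N.
Proof.
move=> p0 r_le; elim: m lo => [|m IHm] lo; first by rewrite count_congr_small.
rewrite mulSn -addnA count_congrD count_congr_period // IHm add1n.
rewrite addSn; congr (_ + (_ < _)%R).+1.
have -> : i - (lo + `|p|%N%:Z) = -1 * `|p|%N%:Z + (i - lo) by lia.
by rewrite -!(modz_abs _ p) modzMDl.
Qed.

Lemma count_congrE p i lo len : p != 0 ->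
  count_congr p i lo len =
    (len %/ `|p| + (((i - lo) %% p)%Z < (len %% `|p|)%N%:Z)%R)%N.
Proof.
move=> p0; rewrite {1}(divn_eq len `|p|) count_congrMD // ltnW // ltn_pmod //.
by rewrite absz_gt0.
Qed.

Lemma modz_ltP (x p r : int) : p != 0 -> r <= `|p| ->
  ((x %% p)%Z < r) <-> exists j, 0 <= j < r /\ (x = j %[mod p])%Z.
Proof.
move=> p0 r_le; split=> [x_lt | [j [/andP[j_ge0 j_lt] ->]]].
  by exists (x %% p)%Z; rewrite modz_ge0 ?x_lt ?modz_mod.
by rewrite -modz_abs modz_small // j_ge0 abszE (lt_le_trans j_lt).
Qed.

Lemma divz_eqP (x q s : int) : 0 < q ->
  (x %/ q)%Z = s <-> exists2 j : nat, (j < `|q|)%N & x = s * q + j%:Z.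
Proof.
move=> q_gt0; have q0 : q != 0 by rewrite gt_eqF.
split=> [<- | [j j_lt ->]].
  have res_ge0 := modz_ge0 x q0; have res_lt := ltz_mod x q0.
  exists `|(x %% q)%Z|%N; first by lia.
  by rewrite gez0_abs //; apply: divz_eq.
rewrite divzMDl // divz_small ?addr0 //; lia.
Qed.

Lemma phi_count_congr p q i s : p != 0 -> 0 < q ->
  phi p q i s = count_congr p i (s * q) `|q|.
Proof.
move=> p0 q_gt0.
pose L := [seq j <- iota 0 `|q| | (s * q + j%:Z == i %[mod p])%Z].
pose h (j : nat) := ((s * q + j%:Z - i) %/ p)%Z.
have h_spec j : j \in L -> i + p * h j = s * q + j%:Z.
  rewrite mem_filter eqz_mod_dvd => /andP[/divzK h_eq _].
  by rewrite /h mulrC h_eq addrC subrK.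
have h_inj : {in L &, injective h}.
  move=> a b /h_spec ha /h_spec hb hab.
  by move: ha; rewrite hab hb => /addrI /eqP; rewrite eqz_nat => /eqP.
have preimage : [set n | ((i + p * n) %/ q)%Z = s]%classic =
    [set` [fset x in map h L]%fset]%classic.
  rewrite predeqE => n /=; rewrite in_fset /= (divz_eqP _ _ _ q_gt0); split.
  - case=> j j_lt n_eq; apply/mapP; exists j.
      rewrite mem_filter mem_iota /= j_lt -n_eq andbT eqz_mod_dvd.
      by rewrite addrAC subrr add0r dvdz_mulr.
    by rewrite /h -n_eq addrAC subrr add0r mulKz.
  - case/mapP=> j; rewrite mem_filter mem_iota => /andP[j_congr j_lt] ->.
    by rewrite h_spec ?mem_filter ?mem_iota ?j_congr //; exists j.
rewrite /phi preimage set_fsetK card_fseq undup_id; last first.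
  by rewrite map_inj_in_uniq // filter_uniq // iota_uniq.
by rewrite size_map size_filter.
Qed.

Lemma eqz_mod_transpose (p t i j : int) :
  (i = p - t + j %[mod p])%Z <-> (i + t = j %[mod p])%Z.
Proof.
rewrite -addrA modzDl addrC; split=> /eqP congr_ij; apply/eqP.
  by rewrite -(eqz_modDr (- t)) addrK.
by rewrite -(eqz_modDr t) subrK.
Qed.

Theorem lemma3p1 (p q : int) (mu : nat) (n k r t : int)
  (hp : p != 0) (hq : 0 < q) (hpq : coprimez p q) (hmu : (0 < mu)%N)
  (hn : (2 * mu%:Z - 1) * q = n * p + r) (hr : 0 <= r < `|p|)
  (hk : (mu%:Z - 1) * q = k * p + t) (ht : 0 <= t < `|p|) (i : int) :
  let S := (\sum_(j < (2 * mu).-1) phi p q i (j%:Z - (mu%:Z - 1)))%N in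
  let F := (((2 * mu%:Z - 1) * q) %/ `|p|)%Z in
  (0 < r ->
     (exists j : int, 0 <= j < r /\ (i = p - t + j %[mod p])%Z) ->
     S%:Z = F + 1) /\
  (0 < r ->
     ~ (exists j : int, 0 <= j < r /\ (i = p - t + j %[mod p])%Z) ->
     S%:Z = F) /\
  (r = 0 -> S%:Z = F).
Proof.
move=> S F; pose lo := - ((mu%:Z - 1) * q); pose L := ((2 * mu).-1 * `|q|)%N.
have q_abs : `|q|%N%:Z = q by rewrite gtz0_abs.
have L_eq : L%:Z = (2 * mu%:Z - 1) * q by rewrite /L PoszM q_abs; lia.
have S_eq : S = count_congr p i lo L.
  rewrite /S -sum_count_congr; apply: eq_bigr => j _.
  by rewrite phi_count_congr // q_abs; congr count_congr; lia.
have L_div : (L %/ `|p|)%N%:Z = F by rewrite -divz_nat L_eq.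
have L_mod : (L %% `|p|)%N%:Z = r.
  by rewrite -modz_nat L_eq hn modz_abs modzMDl -modz_abs modz_small.
have lo_mod : ((i - lo) %% p)%Z = ((i + t) %% p)%Z.
  by apply/eqP; rewrite /lo hk opprK addrA -addrA addrC -addrA modzMDl addrC.
have cond : (exists j, 0 <= j < r /\ (i = p - t + j %[mod p])%Z) <->
    (((i - lo) %% p)%Z < r).
  rewrite lo_mod modz_ltP ?(ltW (proj2 (andP hr))) //.
  by split=> [] [j [j_range /eqz_mod_transpose j_eq]]; exists j.
have S_val : S%:Z = F + (((i - lo) %% p)%Z < r).
  by rewrite S_eq count_congrE // L_mod PoszD L_div.
rewrite S_val; split; [|split].
- by move=> _ /cond ->.
- move=> _ no_j; rewrite (_ : _ < r = false) ?addr0 //.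
  by apply/negP => /cond.
- by move=> r0; rewrite r0 ltNge modz_ge0 //= addr0.
Qed.
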